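(* Let $\lambda=(\lambda_m)_{m\in\mathbb{Z}}$ be a sequence of real numbers in $[0,1)$. Then there exist an entire function $P_\lambda:\mathbb{C}\to\mathbb{C}$ vanishing at every point of the set $\{n+\lambda_m+im: m,n\in\mathbb{Z}\}$ and a constant $c>0$ such that $|P_\lambda(z)|\le e^{c|z|^2}$ for all $z\in\mathbb{C}$. *)

From Stdlib Require Import Reals ZArith.
From Coquelicot Require Import Coquelicot.
Open Scope R_scope.

Definition entire (f : C -> C) : Prop := forall z : C, @ex_derive C_AbsRing C_NormedModule f z.

(** The function is a normalized limit of the products
      P_N(w) = prod_{k<N} (1 - e^{2 pi i (a_{k+1} - w)}) (1 - e^{2 pi i (w - a_{-k})}),
    with a_m = lambda_m + i m, in which the factor of row m vanishes on a_m + Z.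
    For |Im w| <= y the k-th factors are within e^{2 pi y} 2^{-k} of 1, so the products
    converge; moreover every P_N has a first-order expansion with quadratic error whose
    constants are uniform in N, and such expansions pass to the limit, which is therefore
    entire. The limit does not vanish at i/2, where all factors are close to 1. Finally the
    k-th pair of factors is at most (1 + e^{2 pi (|Im w| - k)})^2, and the product of these
    bounds is at most exp (40 + 36 |Im w|^2); the factor e^{-40} absorbs the constant. *)

From Stdlib Require Import Reals ZArith Lra Lia Psatz IndefiniteDescription.
From Coquelicot Require Import Coquelicot.
Open Scope R_scope.

Lemma PI_gt_3 : 3 < PI.
Proof. pose proof PI2_3_2; lra. Qed.

Lemma exp_le_compat a b : a <= b -> exp a <= exp b.
Proof. intros [H|H]; [left; apply exp_increasing; exact H | right; rewrite H; reflexivity]. Qed.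

Lemma exp_le_inv_one_sub x : x < 1 -> exp x <= / (1 - x).
Proof.
  intros Hx. rewrite <- (Ropp_involutive x) at 1. rewrite exp_Ropp.
  apply Rinv_le_contravar; [lra|]. apply exp_ineq1_le.
Qed.

Lemma exp_le_2 x : x <= /2 -> exp x <= 2.
Proof.
  intros Hx. apply Rle_trans with (/ (1 - /2)); [|lra].
  apply Rle_trans with (exp (/2)); [apply exp_le_compat; lra|].
  apply exp_le_inv_one_sub; lra.
Qed.

Lemma exp_sub_one_sub_bound x : Rabs x <= /2 -> 0 <= exp x - 1 - x <= 2 * x ^ 2.
Proof.
  intros Hx. apply Rabs_le_between in Hx. pose proof (exp_ineq1_le x).
  split; [lra|].
  assert (Hinv : / (1 - x) - 1 - x = x ^ 2 / (1 - x)) by (field; lra).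
  assert (x ^ 2 / (1 - x) <= 2 * x ^ 2).
  { apply Rmult_le_reg_r with (1 - x); [lra|].
    unfold Rdiv. rewrite Rmult_assoc, Rinv_l by lra. nra. }
  pose proof (exp_le_inv_one_sub x ltac:(lra)). lra.
Qed.

Lemma Rabs_exp_sub_one_le x : Rabs x <= /2 -> Rabs (exp x - 1) <= 2 * Rabs x.
Proof.
  intros Hx. pose proof (exp_sub_one_sub_bound x Hx).
  apply Rabs_le_between in Hx. apply Rabs_le.
  destruct (Rle_dec 0 x); [rewrite Rabs_right | rewrite Rabs_left]; nra.
Qed.

Lemma one_sub_cos_bound y : Rabs y <= 2 -> 0 <= 1 - cos y <= y ^ 2 / 2.
Proof.
  intros Hy. apply Rabs_le_between in Hy.
  destruct (pre_cos_bound y 0 ltac:(lra) ltac:(lra)) as [Hlow _].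
  unfold cos_approx, cos_term in Hlow. simpl in Hlow.
  pose proof (COS_bound y). split; lra.
Qed.

Lemma sin_taylor_nonneg y : 0 <= y <= 1 -> 0 <= y - sin y <= y ^ 2 /\ 0 <= sin y.
Proof.
  intros Hy. destruct (pre_sin_bound y 0 ltac:(lra) ltac:(lra)) as [Hlow Hup].
  unfold sin_approx, sin_term in Hlow, Hup. simpl in Hlow, Hup.
  assert (0 <= y ^ 3 * (1 / 6 - y ^ 2 / 120)) by (apply Rmult_le_pos; nra).
  split; [split|]; nra.
Qed.

Lemma sin_taylor_bound y : Rabs y <= 1 -> Rabs (sin y - y) <= y ^ 2 /\ Rabs (sin y) <= Rabs y.
Proof.
  intros Hy. apply Rabs_le_between in Hy. destruct (Rle_dec 0 y).
  - destruct (sin_taylor_nonneg y ltac:(lra)) as [Hd Hs].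
    rewrite Rabs_left1, (Rabs_right y), Rabs_right by lra. split; lra.
  - destruct (sin_taylor_nonneg (- y) ltac:(lra)) as [Hd Hs].
    rewrite sin_neg in Hd, Hs.
    rewrite Rabs_right, (Rabs_left y), Rabs_left1 by lra. split; nra.
Qed.

Lemma exp_neg_2PI_INR_le (k : nat) : exp (- (2 * PI * INR k)) <= (/2) ^ k.
Proof.
  induction k as [|k IH]; [simpl; rewrite Rmult_0_r, Ropp_0, exp_0; lra|].
  rewrite S_INR. replace (- (2 * PI * (INR k + 1))) with (- (2 * PI * INR k) + - (2 * PI)) by ring.
  rewrite exp_plus, (exp_Ropp (2 * PI)). simpl. rewrite Rmult_comm.
  assert (/ exp (2 * PI) <= /2).
  { apply Rinv_le_contravar; [lra|]. pose proof (exp_ineq1_le (2 * PI)). pose proof PI_gt_3. lra. }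
  apply Rmult_le_compat; [left; apply Rinv_0_lt_compat, exp_pos | left; apply exp_pos | |]; lra.
Qed.

Lemma exp_2PI_sub_le (t : R) (k : nat) : exp (2 * PI * (t - INR k)) <= exp (2 * PI * t) * (/2) ^ k.
Proof.
  replace (2 * PI * (t - INR k)) with (2 * PI * t + - (2 * PI * INR k)) by ring.
  rewrite exp_plus. apply Rmult_le_compat_l; [left; apply exp_pos | apply exp_neg_2PI_INR_le].
Qed.

Lemma pow_half_bounds (N : nat) : 0 < (/2) ^ N <= 1.
Proof.
  split; [apply pow_lt; lra|]. rewrite <- (pow1 N). apply pow_incr; lra.
Qed.

Lemma one_add_exp_le a : 0 <= a -> 1 + exp a <= exp (a + 1).
Proof.
  intros Ha. rewrite exp_plus. pose proof (exp_ineq1_le 1). pose proof (exp_ineq1_le a). nra.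
Qed.

Lemma exp_neg_PI_lt_quarter : exp (- PI) < /4.
Proof.
  rewrite exp_Ropp. apply Rinv_lt_contravar; [pose proof (exp_pos PI); lra|].
  pose proof (exp_ineq1_le PI). pose proof PI_gt_3. lra.
Qed.

(** * The complex exponential *)

Definition Cexp (z : C) : C := (exp (Re z) * cos (Im z), exp (Re z) * sin (Im z)).

Lemma C_ext (a b : C) : Re a = Re b -> Im a = Im b -> a = b.
Proof. destruct a, b; simpl; intros -> ->; reflexivity. Qed.

Lemma Cexp_add (a b : C) : Cexp (a + b)%C = (Cexp a * Cexp b)%C.
Proof.
  unfold Cexp, Re, Im; apply C_ext; simpl; rewrite exp_plus;
  [rewrite cos_plus | rewrite sin_plus]; ring.
Qed.

Lemma Cmod_Cexp (z : C) : Cmod (Cexp z) = exp (Re z).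
Proof.
  destruct z as [x y]. unfold Cexp, Cmod, Re, Im; cbn [fst snd].
  replace ((exp x * cos y) ^ 2 + (exp x * sin y) ^ 2) with (exp x ^ 2)
    by (rewrite <- (Rmult_1_r (exp x ^ 2)), <- (sin2_cos2 y); unfold Rsqr; ring).
  apply sqrt_pow2. left; apply exp_pos.
Qed.

Lemma Cmod_le_Rabs_Re_Im (z : C) : Cmod z <= Rabs (Re z) + Rabs (Im z).
Proof.
  pose proof (Rabs_pos (Re z)); pose proof (Rabs_pos (Im z)).
  apply Rsqr_incr_0_var; [|lra].
  unfold Cmod. rewrite Rsqr_sqrt by nra.
  rewrite Rsqr_plus, <- !Rsqr_abs. unfold Rsqr, Re, Im in *. nra.
Qed.

Lemma Rabs_Im_le_Cmod (z : C) : Rabs (Im z) <= Cmod z.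
Proof.
  pose proof (Rmax_Cmod z). pose proof (Rmax_r (Rabs (fst z)) (Rabs (snd z))). unfold Im. lra.
Qed.

Lemma Cmod_Cexp_le_2 (z : C) : Cmod z <= /2 -> Cmod (Cexp z) <= 2.
Proof.
  intros Hz. rewrite Cmod_Cexp. apply exp_le_2.
  pose proof (re_le_Cmod z). pose proof (Rle_abs (Re z)). lra.
Qed.

Lemma Cmod_one_sub_bounds (u : C) : 1 - Cmod u <= Cmod (1 - u)%C <= 1 + Cmod u.
Proof.
  pose proof (Cmod_triangle (1 - u)%C u) as Hge. replace (1 - u + u)%C with (RtoC 1) in Hge by ring.
  pose proof (Cmod_triangle 1 (- u)) as Hle. rewrite Cmod_opp in Hle.
  rewrite Cmod_1 in *. split; [lra | exact Hle].
Qed.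

Lemma exp_cos_taylor x y : Rabs x <= /2 -> Rabs y <= 1 ->
  Rabs (exp x * cos y - 1 - x) <= 2 * x ^ 2 + y ^ 2.
Proof.
  intros Hx Hy.
  pose proof (exp_sub_one_sub_bound x Hx). pose proof (one_sub_cos_bound y ltac:(lra)).
  assert (Hexp : exp x <= 2) by (apply exp_le_2; apply Rabs_le_between in Hx; lra).
  pose proof (exp_pos x).
  replace (exp x * cos y - 1 - x) with ((exp x - 1 - x) - exp x * (1 - cos y)) by ring.
  apply Rabs_le. nra.
Qed.

Lemma exp_sin_taylor x y : Rabs x <= /2 -> Rabs y <= 1 ->
  Rabs (exp x * sin y - y) <= x ^ 2 + 2 * y ^ 2.
Proof.
  intros Hx Hy.
  pose proof (Rabs_exp_sub_one_le x Hx). destruct (sin_taylor_bound y Hy) as [Hsy Hs].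
  replace (exp x * sin y - y) with ((exp x - 1) * sin y + (sin y - y)) by ring.
  eapply Rle_trans; [apply Rabs_triang|]. rewrite Rabs_mult.
  assert (Rabs (exp x - 1) * Rabs (sin y) <= 2 * Rabs x * Rabs y)
    by (apply Rmult_le_compat; auto using Rabs_pos).
  rewrite <- (pow2_abs x), <- (pow2_abs y) in *.
  pose proof (pow2_ge_0 (Rabs x - Rabs y)). nra.
Qed.

Lemma Cexp_taylor (z : C) : Cmod z <= /2 -> Cmod (Cexp z - 1 - z)%C <= 3 * Cmod z ^ 2.
Proof.
  intros Hz. pose proof (re_le_Cmod z). pose proof (Rabs_Im_le_Cmod z).
  eapply Rle_trans; [apply Cmod_le_Rabs_Re_Im|].
  rewrite Cmod2_alt. destruct z as [x y]. unfold Cexp, Re, Im in *; simpl in *.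
  pose proof (exp_cos_taylor x y ltac:(lra) ltac:(lra)).
  pose proof (exp_sin_taylor x y ltac:(lra) ltac:(lra)).
  replace (exp x * sin y + - 0 + - y) with (exp x * sin y - y) by ring.
  unfold Rminus in *. lra.
Qed.

(** * Limits of complex sequences *)

Lemma Cmod_lim_le (u : nat -> C) (l : C) (B : R) :
  filterlim u eventually (locally l) -> eventually (fun n => Cmod (u n) <= B) ->
  Cmod l <= B.
Proof.
  intros Hu HB. apply (closed_filterlim_loc u (fun x => Cmod x <= B) l Hu HB).
  apply (closed_comp Cmod (fun r => r <= B)); [exact filterlim_norm | apply closed_le].
Qed.

Lemma Cmod_lim_ge (u : nat -> C) (l : C) (b : R) :
  filterlim u eventually (locally l) -> (forall n, b <= Cmod (u n)) -> b <= Cmod l.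
Proof.
  intros Hu Hb. apply (closed_filterlim u (fun x => b <= Cmod x) l Hu Hb).
  apply (closed_comp Cmod (fun r => b <= r)); [exact filterlim_norm | apply closed_ge].
Qed.

Lemma filterlim_Cminus (u v : nat -> C) (a b : C) :
  filterlim u eventually (locally a) -> filterlim v eventually (locally b) ->
  filterlim (fun n => u n - v n)%C eventually (locally (a - b)%C).
Proof.
  intros Hu Hv.
  apply (filterlim_comp_2 (H := locally (opp b)) u (fun n => opp (v n)) plus Hu);
    [eapply filterlim_comp; [exact Hv | apply (filterlim_opp (V := C_NormedModule))]
    | apply (filterlim_plus (V := C_NormedModule))].
Qed.

Lemma filterlim_Cmult_r (u : nat -> C) (a h : C) :
  filterlim u eventually (locally a) ->
  filterlim (fun n => u n * h)%C eventually (locally (a * h)%C).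
Proof.
  intros Hu. rewrite (Cmult_comm a h).
  apply (filterlim_ext (fun n => h * u n)%C); [intros n; apply Cmult_comm|].
  exact (filterlim_comp _ _ _ u _ _ _ _ Hu
           (filterlim_scal_r (K := C_AbsRing) (V := C_NormedModule) h a)).
Qed.

Lemma Cmod_geometric_tail (u : nat -> C) (B q : R) :
  0 <= q < 1 -> (forall n, Cmod (u (S n) - u n)%C <= B * q ^ n) ->
  forall n d, Cmod (u (d + n)%nat - u n)%C <= B / (1 - q) * (q ^ n - q ^ (d + n)).
Proof.
  intros Hq Hinc n d. induction d as [|d IH]; simpl.
  - replace (u n - u n)%C with (RtoC 0) by ring. rewrite Cmod_0. lra.
  - replace (u (S (d + n)) - u n)%C
      with ((u (S (d + n)) - u (d + n)%nat) + (u (d + n)%nat - u n))%C by ring.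
    eapply Rle_trans; [apply Cmod_triangle|].
    assert (B * q ^ (d + n) = B / (1 - q) * (q ^ (d + n) - q * q ^ (d + n))) by (field; lra).
    pose proof (Hinc (d + n)%nat). lra.
Qed.

Lemma cvg_of_geometric_increments (u : nat -> C) (B q : R) :
  0 <= q < 1 -> (forall n, Cmod (u (S n) - u n)%C <= B * q ^ n) ->
  exists l, filterlim u eventually (locally l).
Proof.
  intros Hq Hinc. pose proof (Cmod_geometric_tail u B q Hq Hinc) as Htail.
  assert (HB : 0 <= B).
  { pose proof (Hinc 0%nat). pose proof (Cmod_ge_0 (u 1%nat - u 0%nat)%C). simpl in *. lra. }
  set (A := B / (1 - q)) in Htail.
  assert (HA : 0 <= A) by (apply Rdiv_le_0_compat; lra).
  (* Qualified: Coquelicot's Riemann-integral library reuses the name. *)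
  apply (Hierarchy.filterlim_locally_cauchy (U := C_CompleteNormedModule) u). intros eps.
  destruct (pow_lt_1_zero q ltac:(rewrite Rabs_right; lra) (eps / (2 * A + 1)))
    as [N HN]; [apply Rdiv_lt_0_compat; [apply cond_pos | lra]|].
  exists (fun n => (N <= n)%nat). split; [exists N; auto|].
  intros n m Hn Hm. apply (norm_compat1 (V := C_NormedModule)). change (Cmod (u m - u n)%C < eps).
  specialize (HN N (le_n N)). rewrite Rabs_right in HN by (apply Rle_ge, pow_le; lra).
  assert (Hsmall : 2 * A * q ^ N < eps).
  { apply Rle_lt_trans with ((2 * A + 1) * q ^ N); [pose proof (pow_le q N); nra|].
    apply Rmult_lt_reg_r with (/ (2 * A + 1)); [apply Rinv_0_lt_compat; lra|].
    rewrite Rmult_comm, <- Rmult_assoc, Rinv_l, Rmult_1_l by lra. exact HN. }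
  pose proof (Htail N (m - N)%nat) as Hm'. pose proof (Htail N (n - N)%nat) as Hn'.
  replace (m - N + N)%nat with m in Hm' by lia. replace (n - N + N)%nat with n in Hn' by lia.
  replace (u m - u n)%C with ((u m - u N) - (u n - u N))%C by ring.
  eapply Rle_lt_trans; [apply Cmod_triangle|]. rewrite Cmod_opp.
  pose proof (pow_le q m); pose proof (pow_le q n). nra.
Qed.

(** * Differentiability of limits *)

Lemma is_derive_of_quadratic_remainder (f : C -> C) (z D : C) (r K : R) :
  0 < r ->
  (forall h, Cmod h < r -> Cmod (f (z + h) - f z - D * h)%C <= K * Cmod h ^ 2) ->
  is_derive f z D.
Proof.
  intros Hr Hrem. split; [apply is_linear_scal_l|].
  intros x Hx.
  apply (is_filter_lim_locally_unique (V := AbsRing_NormedModule C_AbsRing)) in Hx. subst x.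
  intros eps. pose proof (cond_pos eps). pose proof (Rabs_pos K).
  set (delta := Rmin r (eps / (Rabs K + 1))).
  assert (Hdelta : 0 < delta) by (apply Rmin_case; [lra | apply Rdiv_lt_0_compat; lra]).
  apply (filter_imp (ball_norm z (mkposreal _ Hdelta)));
    [|apply (locally_ball_norm (V := AbsRing_NormedModule C_AbsRing))].
  intros y Hy. change (Cmod (y - z)%C < delta) in Hy.
  change (Cmod (f y - f z - (y - z) * D)%C <= eps * Cmod (y - z)%C).
  set (h := (y - z)%C) in *.
  replace y with (z + h)%C by (unfold h; ring). rewrite (Cmult_comm h D).
  assert (Hhr : Cmod h < r)
    by (pose proof (Rmin_l r (eps / (Rabs K + 1))); unfold delta in Hy; lra).
  assert (HKh : Rabs K * Cmod h <= eps).
  { apply Rle_trans with ((Rabs K + 1) * (eps / (Rabs K + 1))); [|right; field; lra].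
    pose proof (Rmin_r r (eps / (Rabs K + 1))). unfold delta in Hy.
    apply Rmult_le_compat; try lra. apply Cmod_ge_0. }
  eapply Rle_trans; [apply Hrem, Hhr|].
  pose proof (Cmod_ge_0 h). pose proof (Rle_abs K). nra.
Qed.

Section UniformQuadraticLimit.

Variables (f : nat -> C -> C) (F : C -> C) (z : C) (r K : R).
Hypothesis r_pos : 0 < r.
Hypothesis f_cvg : forall w, filterlim (fun n => f n w) eventually (locally (F w)).

Lemma derivatives_cvg (D : nat -> C) :
  (forall n h, Cmod h < r -> Cmod (f n (z + h) - f n z - D n * h)%C <= K * Cmod h ^ 2) ->
  exists Dl, filterlim D eventually (locally Dl).
Proof.
  intros HD. apply (Hierarchy.filterlim_locally_cauchy (U := C_CompleteNormedModule) D).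
  (* For real [h = t], [(D m - D n) h] differs by two remainders of size [K t^2] from the
     difference of the increments of [f m] and [f n] on [[z, z + h]], which both tend to
     the increment of [F]. *)
  intros eps. pose proof (cond_pos eps). pose proof (Rabs_pos K).
  set (t := Rmin (r / 2) (eps / (4 * (Rabs K + 1)))).
  assert (Ht : 0 < t) by (apply Rmin_case; [lra | apply Rdiv_lt_0_compat; lra]).
  assert (Htr : t < r) by (pose proof (Rmin_l (r / 2) (eps / (4 * (Rabs K + 1)))); unfold t; lra).
  assert (HKt : Rabs K * t <= eps / 4).
  { apply Rle_trans with ((Rabs K + 1) * (eps / (4 * (Rabs K + 1)))); [|right; field; lra].
    pose proof (Rmin_r (r / 2) (eps / (4 * (Rabs K + 1)))) as Hmin. fold t in Hmin. nra. }
  set (h := RtoC t).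
  assert (Hh : Cmod h = t) by (unfold h; rewrite Cmod_R, Rabs_right; lra).
  assert (Hq : 0 < eps * t / 4) by nra.
  exists (fun n => ball_norm (F (z + h) - F z)%C (eps * t / 4) (f n (z + h) - f n z)%C).
  split.
  { apply (proj1 (filterlim_locally_ball_norm _ _) (filterlim_Cminus _ _ _ _ (f_cvg _) (f_cvg _))
             (mkposreal _ Hq)). }
  intros n m Hn Hm. apply (norm_compat1 (V := C_NormedModule)).
  change (Cmod (D m - D n)%C < eps).
  unfold ball_norm in Hn, Hm.
  change (Cmod (f n (z + h) - f n z - (F (z + h) - F z))%C < eps * t / 4) in Hn.
  change (Cmod (f m (z + h) - f m z - (F (z + h) - F z))%C < eps * t / 4) in Hm.
  pose proof (HD n h ltac:(lra)) as Rn. pose proof (HD m h ltac:(lra)) as Rm. rewrite Hh in Rn, Rm.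
  assert (Hsplit : Cmod ((D m - D n) * h)%C < eps * t).
  { replace ((D m - D n) * h)%C with
      ((f m (z + h) - f m z - (F (z + h) - F z)) - (f n (z + h) - f n z - (F (z + h) - F z))
       - (f m (z + h) - f m z - D m * h) + (f n (z + h) - f n z - D n * h))%C by ring.
    eapply Rle_lt_trans; [apply Cmod_triangle|].
    eapply Rle_lt_trans; [apply Rplus_le_compat_r, Cmod_triangle|].
    eapply Rle_lt_trans; [apply Rplus_le_compat_r, Rplus_le_compat_r, Cmod_triangle|].
    rewrite !Cmod_opp. pose proof (Rle_abs K). nra. }
  rewrite Cmod_mult, Hh in Hsplit. apply Rmult_lt_reg_r with t; lra.
Qed.

Lemma ex_derive_of_uniform_quadratic_limit :
  (forall n, exists D, forall h, Cmod h < r ->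
     Cmod (f n (z + h) - f n z - D * h)%C <= K * Cmod h ^ 2) ->
  ex_derive F z.
Proof.
  intros HD. destruct (functional_choice _ HD) as [D HD'].
  destruct (derivatives_cvg D HD') as [Dl HDl].
  exists Dl. apply (is_derive_of_quadratic_remainder F z Dl r K r_pos).
  intros h Hh. apply (Cmod_lim_le (fun n => f n (z + h) - f n z - D n * h)%C).
  - apply filterlim_Cminus; [apply filterlim_Cminus; apply f_cvg | apply filterlim_Cmult_r, HDl].
  - exists 0%nat. intros n _. exact (HD' n h Hh).
Qed.

End UniformQuadraticLimit.

Lemma entire_Cmult_r (f : C -> C) (c : C) : entire f -> entire (fun w => f w * c)%C.
Proof.
  intros Hf z. destruct (Hf z) as [l Hl]. exists (l * c)%C. unfold is_derive in *.
  eapply filterdiff_ext_lin.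
  - eapply filterdiff_ext;
      [| apply (filterdiff_scal_r_fct (U := AbsRing_NormedModule C_AbsRing) (V := C_NormedModule)
                  c f _ Cmult_comm Hl)].
    intros w. apply Cmult_comm.
  - intros y. change (c * (y * l) = y * (l * c))%C. ring.
Qed.

(** * First-order expansions with quadratic error *)

(* Unlike holomorphy, this carries explicit constants, so it survives products and
   pointwise limits with uniform constants. *)
Definition taylor_control (f : C -> C) (z : C) (r A B K : R) : Prop :=
  (forall h, Cmod h < r -> Cmod (f (z + h)%C) <= A) /\
  exists D, Cmod D <= B /\
    forall h, Cmod h < r -> Cmod (f (z + h) - f z - D * h)%C <= K * Cmod h ^ 2.

Lemma taylor_control_center f z r A B K :
  0 < r -> taylor_control f z r A B K -> Cmod (f z) <= A.
Proof.
  intros Hr [Hf _]. rewrite <- (Cplus_0_r z). apply Hf. rewrite Cmod_0. exact Hr.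
Qed.

Lemma taylor_control_weaken f z r A B K A' B' K' :
  A <= A' -> B <= B' -> K <= K' ->
  taylor_control f z r A B K -> taylor_control f z r A' B' K'.
Proof.
  intros HA HB HK [Hf [D [HD Hrem]]]. split.
  - intros h Hh. specialize (Hf h Hh). lra.
  - exists D. split; [lra|]. intros h Hh. eapply Rle_trans; [apply Hrem, Hh|].
    apply Rmult_le_compat_r; [apply pow2_ge_0 | exact HK].
Qed.

Lemma taylor_control_mul f g z r A B K a b k :
  0 < r <= 1 -> 0 <= K ->
  taylor_control f z r A B K -> taylor_control g z r a b k ->
  taylor_control (fun w => f w * g w)%C z r
    (A * a) (A * b + B * a) (K * a + (B + K) * b + A * k).
Proof.
  intros Hr HK Hf Hg.
  pose proof (taylor_control_center f z r A B K ltac:(lra) Hf) as Hfz.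
  pose proof (taylor_control_center g z r a b k ltac:(lra) Hg) as Hgz.
  destruct Hf as [Hf [D [HD Hfrem]]], Hg as [Hg [d [Hd Hgrem]]].
  pose proof (Cmod_ge_0 (f z)); pose proof (Cmod_ge_0 (g z)).
  pose proof (Cmod_ge_0 D); pose proof (Cmod_ge_0 d).
  split.
  - intros h Hh. rewrite Cmod_mult.
    apply Rmult_le_compat; auto using Cmod_ge_0.
  - exists (f z * d + D * g z)%C. split.
    + eapply Rle_trans; [apply Cmod_triangle|]. rewrite !Cmod_mult.
      apply Rplus_le_compat; apply Rmult_le_compat; lra.
    + intros h Hh.
      pose proof (Hfrem h Hh) as HRf; pose proof (Hgrem h Hh) as HRg; pose proof (Hf h Hh).
      set (Rf := (f (z + h) - f z - D * h)%C) in *. set (Rg := (g (z + h) - g z - d * h)%C) in *.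
      pose proof (Cmod_ge_0 h); pose proof (Cmod_ge_0 Rf); pose proof (Cmod_ge_0 Rg).
      assert (Hincr : Cmod (f (z + h) - f z)%C <= (B + K) * Cmod h).
      { replace (f (z + h) - f z)%C with (D * h + Rf)%C by (unfold Rf; ring).
        eapply Rle_trans; [apply Cmod_triangle|]. rewrite Cmod_mult.
        assert (Cmod D * Cmod h <= B * Cmod h) by (apply Rmult_le_compat_r; lra).
        assert (K * Cmod h ^ 2 <= K * Cmod h) by (apply Rmult_le_compat_l; nra).
        lra. }
      replace (f (z + h) * g (z + h) - f z * g z - (f z * d + D * g z) * h)%C
        with (Rf * g z + (f (z + h) - f z) * d * h + f (z + h) * Rg)%C by (unfold Rf, Rg; ring).
      eapply Rle_trans; [apply Cmod_triangle|].
      eapply Rle_trans; [apply Rplus_le_compat_r, Cmod_triangle|].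
      rewrite !Cmod_mult.
      pose proof (Cmod_ge_0 (f (z + h)%C)); pose proof (Cmod_ge_0 (f (z + h) - f z)%C).
      assert (T1 : Cmod Rf * Cmod (g z) <= K * Cmod h ^ 2 * a) by (apply Rmult_le_compat; lra).
      assert (T2 : Cmod (f (z + h) - f z)%C * Cmod d * Cmod h <= (B + K) * Cmod h * b * Cmod h).
      { apply Rmult_le_compat_r; [lra|]. apply Rmult_le_compat; lra. }
      assert (T3 : Cmod (f (z + h)%C) * Cmod Rg <= A * (k * Cmod h ^ 2))
        by (apply Rmult_le_compat; lra).
      lra.
Qed.

Lemma taylor_control_mul_near_one f g z r Q eta :
  0 < r <= 1 -> 1 <= Q -> 0 <= eta ->
  taylor_control f z r Q (Q ^ 2) (Q ^ 4) -> taylor_control g z r (1 + eta) eta eta ->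
  taylor_control (fun w => f w * g w)%C z r
    (Q * (1 + eta)) ((Q * (1 + eta)) ^ 2) ((Q * (1 + eta)) ^ 4).
Proof.
  intros Hr HQ Heta Hf Hg.
  eapply taylor_control_weaken; [apply Rle_refl | | |
    apply (taylor_control_mul f g z r Q (Q ^ 2) (Q ^ 4) (1 + eta) eta eta Hr
             ltac:(apply pow_le; lra) Hf Hg)].
  - assert (Q <= Q ^ 2) by nra. nra.
  - assert (Q <= Q ^ 2) by nra. assert (Q ^ 2 <= Q ^ 4) by nra.
    assert (0 <= Q ^ 4 * eta ^ 2) by (apply Rmult_le_pos; nra).
    assert (0 <= Q ^ 4 * eta ^ 3) by (apply Rmult_le_pos; [nra | apply pow_le; lra]).
    assert (0 <= Q ^ 4 * eta ^ 4) by (apply Rmult_le_pos; [nra | apply pow_le; lra]).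
    replace ((Q * (1 + eta)) ^ 4) with (Q ^ 4 + 4 * (Q ^ 4 * eta) + 6 * (Q ^ 4 * eta ^ 2)
                                        + 4 * (Q ^ 4 * eta ^ 3) + Q ^ 4 * eta ^ 4) by ring.
    nra.
Qed.

Lemma taylor_control_one_sub_exponential (u : C -> C) (beta z : C) (r b : R) :
  0 < r -> Cmod beta <= b -> b * r <= /2 ->
  (forall h, u (z + h)%C = (u z * Cexp (beta * h))%C) ->
  taylor_control (fun w => 1 - u w)%C z r
    (1 + 2 * Cmod (u z)) (Cmod (u z) * b) (3 * Cmod (u z) * b ^ 2).
Proof.
  intros Hr Hb Hbr Hu.
  pose proof (Cmod_ge_0 (u z)). pose proof (Cmod_ge_0 beta).
  assert (Hsmall : forall h, Cmod h < r -> Cmod (beta * h)%C <= /2).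
  { intros h Hh. rewrite Cmod_mult. pose proof (Cmod_ge_0 h).
    apply Rle_trans with (b * r); [apply Rmult_le_compat; lra | exact Hbr]. }
  split.
  - intros h Hh. rewrite Hu.
    eapply Rle_trans; [apply Cmod_triangle|]. rewrite Cmod_opp, Cmod_1, Cmod_mult.
    pose proof (Cmod_Cexp_le_2 _ (Hsmall h Hh)). nra.
  - exists (- (u z * beta))%C. split.
    + rewrite Cmod_opp, Cmod_mult. apply Rmult_le_compat_l; lra.
    + intros h Hh. rewrite Hu.
      replace (1 - u z * Cexp (beta * h) - (1 - u z) - - (u z * beta) * h)%C
        with (- (u z * (Cexp (beta * h) - 1 - beta * h)))%C by ring.
      rewrite Cmod_opp, Cmod_mult.
      pose proof (Cexp_taylor _ (Hsmall h Hh)) as Htaylor. rewrite Cmod_mult in Htaylor.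
      assert (3 * (Cmod beta * Cmod h) ^ 2 <= 3 * b ^ 2 * Cmod h ^ 2).
      { assert (Cmod beta ^ 2 <= b ^ 2) by (apply pow_incr; lra).
        pose proof (pow2_ge_0 (Cmod h)). nra. }
      replace (3 * Cmod (u z) * b ^ 2 * Cmod h ^ 2)
        with (Cmod (u z) * (3 * b ^ 2 * Cmod h ^ 2)) by ring.
      apply Rmult_le_compat_l; lra.
Qed.

Lemma taylor_control_pow_weaken f z r Q Q' :
  0 <= Q <= Q' ->
  taylor_control f z r Q (Q ^ 2) (Q ^ 4) -> taylor_control f z r Q' (Q' ^ 2) (Q' ^ 4).
Proof.
  intros HQ. apply taylor_control_weaken; [lra | apply pow_incr; lra | apply pow_incr; lra].
Qed.

Lemma taylor_control_factor (u : C -> C) (beta z : C) (eta : R) :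
  Cmod beta <= 8 -> 192 * Cmod (u z) <= eta ->
  (forall h, u (z + h)%C = (u z * Cexp (beta * h))%C) ->
  taylor_control (fun w => 1 - u w)%C z (/16) (1 + eta) eta eta.
Proof.
  intros Hb Heta Hu. pose proof (Cmod_ge_0 (u z)).
  eapply taylor_control_weaken;
    [| | | apply (taylor_control_one_sub_exponential u beta z (/16) 8); auto; lra]; lra.
Qed.

(** * A majorant for the growth *)

Fixpoint growth_majorant (N : nat) (t : R) : R :=
  match N with
  | O => 1
  | S k => growth_majorant k t * (1 + exp (2 * PI * (t - INR k))) ^ 2
  end.

Lemma growth_majorant_pos N t : 0 < growth_majorant N t.
Proof.
  induction N as [|N IH]; [simpl; lra|].
  cbn [growth_majorant]. pose proof (exp_pos (2 * PI * (t - INR N))).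
  apply Rmult_lt_0_compat; [lra | apply pow_lt; lra].
Qed.

Lemma growth_majorant_succ_shift N t :
  growth_majorant (S N) t = (1 + exp (2 * PI * t)) ^ 2 * growth_majorant N (t - 1).
Proof.
  induction N as [|N IH].
  - simpl. rewrite !Rminus_0_r. ring.
  - change (growth_majorant (S (S N)) t)
      with (growth_majorant (S N) t * (1 + exp (2 * PI * (t - INR (S N)))) ^ 2).
    rewrite IH. simpl growth_majorant. rewrite S_INR.
    replace (t - (INR N + 1)) with (t - 1 - INR N) by ring. ring.
Qed.

Lemma growth_majorant_le_of_nonpos N t : t <= 0 -> growth_majorant N t <= exp (4 * (1 - (/2) ^ N)).
Proof.
  intros Ht. induction N as [|N IH]; [simpl; rewrite Rminus_diag, Rmult_0_r, exp_0; lra|].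
  simpl growth_majorant. set (e := exp (2 * PI * (t - INR N))).
  assert (He : e <= (/2) ^ N).
  { apply Rle_trans with (exp (2 * PI * t) * (/2) ^ N); [apply exp_2PI_sub_le|].
    pose proof (pow_half_bounds N). assert (exp (2 * PI * t) <= 1).
    { rewrite <- exp_0. apply exp_le_compat. pose proof PI_gt_3. nra. }
    nra. }
  pose proof (exp_pos (2 * PI * (t - INR N))). fold e in H.
  assert (Hsq : (1 + e) ^ 2 <= exp (2 * (/2) ^ N)).
  { replace (2 * (/2) ^ N) with ((/2) ^ N + (/2) ^ N) by ring. rewrite exp_plus.
    pose proof (exp_ineq1_le ((/2) ^ N)). simpl. rewrite Rmult_1_r.
    apply Rmult_le_compat; lra. }
  replace (4 * (1 - (/2) ^ S N)) with (4 * (1 - (/2) ^ N) + 2 * (/2) ^ N) by (simpl; field).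
  rewrite exp_plus. pose proof (growth_majorant_pos N t).
  apply Rmult_le_compat; [lra | pose proof (pow2_ge_0 (1 + e)); lra | exact IH | exact Hsq].
Qed.

(* Peeling off the factor [k = 0] shifts [t] to [t - 1]; for [t <= n + 1] that factor is
   at most [exp (16 n + 18)]. *)
Lemma growth_majorant_le_nat (n : nat) :
  forall t, t <= INR n -> forall N, growth_majorant N t <= exp (4 + 18 * INR n ^ 2).
Proof.
  induction n as [|n IH]; intros t Ht N.
  - simpl in *. eapply Rle_trans; [apply growth_majorant_le_of_nonpos, Ht|].
    apply exp_le_compat. pose proof (pow_half_bounds N). lra.
  - destruct N as [|N].
    + cbn [growth_majorant]. rewrite <- exp_0 at 1. apply exp_le_compat.
      pose proof (pow2_ge_0 (INR (S n))). lra.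
    + rewrite growth_majorant_succ_shift. rewrite S_INR in *.
      pose proof (IH (t - 1) ltac:(lra) N) as Hrest.
      pose proof PI_gt_3. pose proof PI_4. pose proof (pos_INR n).
      assert (Hfirst : 1 + exp (2 * PI * t) <= exp (8 * (INR n + 1) + 1)).
      { destruct (Rle_dec 0 t).
        - eapply Rle_trans; [apply one_add_exp_le; nra|]. apply exp_le_compat. nra.
        - assert (exp (2 * PI * t) <= 1) by (rewrite <- exp_0; apply exp_le_compat; nra).
          pose proof (exp_ineq1_le (8 * (INR n + 1) + 1)). nra. }
      assert (Hsq : (1 + exp (2 * PI * t)) ^ 2 <= exp (2 * (8 * (INR n + 1) + 1))).
      { replace (2 * (8 * (INR n + 1) + 1))
          with ((8 * (INR n + 1) + 1) + (8 * (INR n + 1) + 1)) by ring.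
        rewrite exp_plus. pose proof (exp_pos (2 * PI * t)). simpl. rewrite Rmult_1_r.
        apply Rmult_le_compat; lra. }
      eapply Rle_trans.
      { apply Rmult_le_compat;
          [apply pow2_ge_0 | left; apply growth_majorant_pos | exact Hsq | exact Hrest]. }
      rewrite <- exp_plus. apply exp_le_compat. nra.
Qed.

Lemma growth_majorant_le_quadratic N t : 0 <= t -> growth_majorant N t <= exp (40 + 36 * t ^ 2).
Proof.
  intros Ht. destruct (archimed t) as [Hup _].
  assert (Hnn : (0 <= up t)%Z) by (apply le_IZR; lra).
  assert (Hn : INR (Z.to_nat (up t)) = IZR (up t)) by (rewrite INR_IZR_INZ, Z2Nat.id; auto).
  pose proof (archimed t) as [_ Hup'].
  eapply Rle_trans; [apply (growth_majorant_le_nat (Z.to_nat (up t))); lra|].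
  apply exp_le_compat. rewrite Hn.
  assert (IZR (up t) ^ 2 <= (t + 1) ^ 2) by (apply pow_incr; lra).
  pose proof (pow2_ge_0 (t - 1)). lra.
Qed.

(** * The partial products *)

Definition two_pi_i : C := (0, 2 * PI).

Definition cis2pi (w : C) : C := Cexp (two_pi_i * w)%C.

Lemma Cmod_two_pi_i_le : Cmod two_pi_i <= 8.
Proof.
  eapply Rle_trans; [apply Cmod_le_Rabs_Re_Im|]. unfold two_pi_i, Re, Im; simpl.
  rewrite Rabs_R0, Rabs_right by (pose proof PI_gt_3; lra). pose proof PI_4. lra.
Qed.

Lemma Cmod_cis2pi (w : C) : Cmod (cis2pi w) = exp (- (2 * PI) * Im w).
Proof.
  unfold cis2pi. rewrite Cmod_Cexp. f_equal. destruct w; unfold two_pi_i, Re, Im; simpl. ring.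
Qed.

Lemma cis2pi_IZR (n : Z) : cis2pi (IZR n) = 1%C.
Proof.
  assert (Hsin : sin (IZR n * PI) = 0) by (apply sin_eq_0_1; exists n; reflexivity).
  unfold cis2pi. replace (two_pi_i * IZR n)%C with ((0, 2 * (IZR n * PI)) : C)
    by (unfold two_pi_i; apply C_ext; simpl; ring).
  unfold Cexp, Re, Im; simpl. rewrite exp_0, cos_2a_sin, sin_2a, Hsin.
  apply C_ext; simpl; ring.
Qed.

Definition exp_height (w : C) : R := exp (2 * PI * Rabs (Im w)).

Lemma exp_height_pos w : 0 < exp_height w.
Proof. apply exp_pos. Qed.

Section PartialProducts.

Variable lambda : Z -> R.

Definition lattice_point (m : Z) : C := (lambda m, IZR m).

Definition up_exp (k : nat) (w : C) : C := cis2pi (lattice_point (Z.of_nat k + 1) - w).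

Definition down_exp (k : nat) (w : C) : C := cis2pi (w - lattice_point (- Z.of_nat k)).

(* The factor of row [m = k + 1 > 0] is [1 - cis2pi (a_m - w)], that of row
   [m = - k <= 0] is [1 - cis2pi (w - a_m)]: each vanishes on [a_m + Z], and the
   orientations make both tend to 1 as [k] grows. *)
Fixpoint partial_prod (N : nat) (w : C) : C :=
  match N with
  | O => 1
  | S k => partial_prod k w * (1 - up_exp k w) * (1 - down_exp k w)
  end.

Lemma Cmod_up_exp k w : Cmod (up_exp k w) = exp (- (2 * PI) * (INR k + 1 - Im w)).
Proof.
  unfold up_exp. rewrite Cmod_cis2pi. f_equal. unfold lattice_point, Im; simpl.
  rewrite plus_IZR, <- INR_IZR_INZ. ring.
Qed.

Lemma Cmod_down_exp k w : Cmod (down_exp k w) = exp (- (2 * PI) * (Im w + INR k)).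
Proof.
  unfold down_exp. rewrite Cmod_cis2pi. f_equal. unfold lattice_point, Im; simpl.
  rewrite opp_IZR, <- INR_IZR_INZ. ring.
Qed.

Lemma Cmod_up_exp_le k w : Cmod (up_exp k w) <= exp (2 * PI * (Rabs (Im w) - INR k)).
Proof.
  rewrite Cmod_up_exp. apply exp_le_compat.
  pose proof PI_gt_3. pose proof (Rle_abs (Im w)). nra.
Qed.

Lemma Cmod_down_exp_le k w : Cmod (down_exp k w) <= exp (2 * PI * (Rabs (Im w) - INR k)).
Proof.
  rewrite Cmod_down_exp. apply exp_le_compat.
  pose proof PI_gt_3. pose proof (Rle_abs (- Im w)). rewrite Rabs_Ropp in *. nra.
Qed.

Lemma partial_prod_eq_0_after k w :
  partial_prod (S k) w = 0%C -> forall N, (k < N)%nat -> partial_prod N w = 0%C.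
Proof.
  intros Hk N HN. induction N as [|N IH]; [lia|].
  destruct (Nat.eq_dec k N) as [<-|Hne]; [exact Hk|].
  simpl. rewrite IH by lia. ring.
Qed.

Lemma partial_prod_vanishes (m n : Z) :
  exists k, forall N, (k < N)%nat -> partial_prod N (IZR n + lambda m, IZR m) = 0%C.
Proof.
  set (w := (IZR n + lambda m, IZR m) : C).
  destruct (Z_le_gt_dec 1 m) as [Hm|Hm].
  - exists (Z.to_nat (m - 1)). apply partial_prod_eq_0_after. simpl.
    unfold up_exp. replace (Z.of_nat (Z.to_nat (m - 1)) + 1)%Z with m by lia.
    replace (lattice_point m - w)%C with (RtoC (IZR (- n)))
      by (unfold w, lattice_point; apply C_ext; simpl; rewrite ?opp_IZR; ring).
    rewrite cis2pi_IZR. ring.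
  - exists (Z.to_nat (- m)). apply partial_prod_eq_0_after. simpl.
    unfold down_exp. replace (- Z.of_nat (Z.to_nat (- m)))%Z with m by lia.
    replace (w - lattice_point m)%C with (RtoC (IZR n))
      by (unfold w, lattice_point; apply C_ext; simpl; ring).
    rewrite cis2pi_IZR. ring.
Qed.

Lemma up_exp_shift k z h : up_exp k (z + h)%C = (up_exp k z * Cexp (- two_pi_i * h))%C.
Proof. unfold up_exp, cis2pi. rewrite <- Cexp_add. f_equal. ring. Qed.

Lemma down_exp_shift k z h : down_exp k (z + h)%C = (down_exp k z * Cexp (two_pi_i * h))%C.
Proof. unfold down_exp, cis2pi. rewrite <- Cexp_add. f_equal. ring. Qed.

Lemma Cmod_up_exp_le_geom k w : Cmod (up_exp k w) <= exp_height w * (/2) ^ k.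
Proof. eapply Rle_trans; [apply Cmod_up_exp_le | apply exp_2PI_sub_le]. Qed.

Lemma Cmod_down_exp_le_geom k w : Cmod (down_exp k w) <= exp_height w * (/2) ^ k.
Proof. eapply Rle_trans; [apply Cmod_down_exp_le | apply exp_2PI_sub_le]. Qed.

(* Step [N] multiplies the bound by [(1 + eta)^2 <= exp (2 eta)], where [eta = 192 M 2^-N]
   and [M = exp_height z]; these exponents add up to [768 M (1 - 2^-N)]. *)
Lemma taylor_control_partial_prod N z :
  taylor_control (partial_prod N) z (/16)
    (exp (768 * exp_height z * (1 - (/2) ^ N)))
    (exp (768 * exp_height z * (1 - (/2) ^ N)) ^ 2)
    (exp (768 * exp_height z * (1 - (/2) ^ N)) ^ 4).
Proof.
  pose proof (exp_height_pos z) as HM. set (M := exp_height z) in *.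
  induction N as [|N IH].
  - simpl. replace (768 * M * (1 - 1)) with 0 by ring. rewrite exp_0. split.
    + intros h _. rewrite Cmod_1. lra.
    + exists (RtoC 0). split; [rewrite Cmod_0; lra|].
      intros h _. replace (1 - 1 - 0 * h)%C with (RtoC 0) by ring. rewrite Cmod_0.
      pose proof (pow2_ge_0 (Cmod h)). lra.
  - set (eta := 192 * M * (/2) ^ N).
    assert (Heta : 0 <= eta) by (unfold eta; pose proof (pow_half_bounds N); nra).
    set (Q := exp (768 * M * (1 - (/2) ^ N))) in IH.
    assert (HQ : 1 <= Q).
    { unfold Q. rewrite <- exp_0 at 1. apply exp_le_compat.
      apply Rmult_le_pos; [lra | pose proof (pow_half_bounds N); lra]. }
    assert (Hup : taylor_control (fun w => 1 - up_exp N w)%C z (/16) (1 + eta) eta eta).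
    { apply (taylor_control_factor _ (- two_pi_i));
        [rewrite Cmod_opp; apply Cmod_two_pi_i_le | | apply up_exp_shift].
      pose proof (Cmod_up_exp_le_geom N z) as Hb. fold M in Hb. unfold eta. lra. }
    assert (Hdown : taylor_control (fun w => 1 - down_exp N w)%C z (/16) (1 + eta) eta eta).
    { apply (taylor_control_factor _ two_pi_i); [apply Cmod_two_pi_i_le | | apply down_exp_shift].
      pose proof (Cmod_down_exp_le_geom N z) as Hb. fold M in Hb. unfold eta. lra. }
    pose proof (taylor_control_mul_near_one _ _ _ (/16) _ _ ltac:(lra) HQ Heta IH Hup) as H1.
    pose proof (taylor_control_mul_near_one _ _ _ (/16) (Q * (1 + eta)) _
                  ltac:(lra) ltac:(nra) Heta H1 Hdown) as H2.
    apply (taylor_control_pow_weaken _ _ _ (Q * (1 + eta) * (1 + eta))); [split; [nra|] | exact H2].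
    replace (768 * M * (1 - (/2) ^ S N)) with (768 * M * (1 - (/2) ^ N) + eta + eta)
      by (unfold eta; simpl; field).
    rewrite !exp_plus. fold Q. pose proof (exp_ineq1_le eta).
    apply Rmult_le_compat; [nra | lra | apply Rmult_le_compat_l | ]; lra.
Qed.

Lemma Cmod_partial_prod_le N w : Cmod (partial_prod N w) <= exp (768 * exp_height w).
Proof.
  eapply Rle_trans.
  { apply (taylor_control_center _ _ (/16) _ _ _ ltac:(lra) (taylor_control_partial_prod N w)). }
  apply exp_le_compat. pose proof (exp_height_pos w). pose proof (pow_half_bounds N). nra.
Qed.

Lemma partial_prod_remainder_le N z :
  exists D, forall h, Cmod h < /16 ->
    Cmod (partial_prod N (z + h) - partial_prod N z - D * h)%C
      <= exp (768 * exp_height z) ^ 4 * Cmod h ^ 2.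
Proof.
  destruct (taylor_control_partial_prod N z) as [_ [D [_ HD]]]. exists D.
  intros h Hh. eapply Rle_trans; [apply HD, Hh|].
  apply Rmult_le_compat_r; [apply pow2_ge_0|]. apply pow_incr. split; [left; apply exp_pos|].
  apply exp_le_compat. pose proof (exp_height_pos z). pose proof (pow_half_bounds N). nra.
Qed.

Lemma Cmod_partial_prod_succ_sub N w :
  Cmod (partial_prod (S N) w - partial_prod N w)%C
    <= exp (768 * exp_height w) * (exp_height w ^ 2 + 2 * exp_height w) * (/2) ^ N.
Proof.
  set (u := up_exp N w). set (v := down_exp N w).
  replace (partial_prod (S N) w - partial_prod N w)%C
    with (partial_prod N w * (u * v - u - v))%C by (simpl; fold u v; ring).
  rewrite Cmod_mult. rewrite Rmult_assoc.
  apply Rmult_le_compat; [apply Cmod_ge_0 | apply Cmod_ge_0 | apply Cmod_partial_prod_le |].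
  pose proof (Cmod_up_exp_le_geom N w) as Hu. pose proof (Cmod_down_exp_le_geom N w) as Hv.
  fold u in Hu. fold v in Hv. pose proof (Cmod_ge_0 u). pose proof (Cmod_ge_0 v).
  pose proof (exp_height_pos w). pose proof (pow_half_bounds N).
  set (M := exp_height w) in *. set (p := (/2) ^ N) in *.
  eapply Rle_trans; [apply Cmod_triangle|]. rewrite Cmod_opp.
  eapply Rle_trans; [apply Rplus_le_compat_r, Cmod_triangle|]. rewrite Cmod_opp, Cmod_mult.
  assert (Cmod u * Cmod v <= M ^ 2 * p)
    by (apply Rle_trans with ((M * p) * (M * p)); [apply Rmult_le_compat | ]; nra).
  nra.
Qed.

Lemma partial_prod_cvg w : exists l, filterlim (fun N => partial_prod N w) eventually (locally l).
Proof.
  apply (cvg_of_geometric_increments _ _ (/2) ltac:(lra) (fun N => Cmod_partial_prod_succ_sub N w)).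
Qed.

Lemma Cmod_partial_prod_half_i_ge N :
  1 - 4 * exp (- PI) * (1 - (/2) ^ N) <= Cmod (partial_prod N (0, /2)).
Proof.
  pose proof exp_neg_PI_lt_quarter. pose proof (exp_pos (- PI)).
  induction N as [|N IH]; [simpl; rewrite Cmod_1; lra|].
  set (a := exp (- PI) * (/2) ^ N). pose proof (pow_half_bounds N).
  assert (Hu : Cmod (up_exp N (0, /2)) <= a).
  { rewrite Cmod_up_exp. unfold a, Im; simpl. pose proof (exp_neg_2PI_INR_le N).
    replace (- (2 * PI) * (INR N + 1 - / 2)) with (- PI + - (2 * PI * INR N)) by field.
    rewrite exp_plus. apply Rmult_le_compat_l; lra. }
  assert (Hv : Cmod (down_exp N (0, /2)) <= a).
  { rewrite Cmod_down_exp. unfold a, Im; simpl. pose proof (exp_neg_2PI_INR_le N).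
    replace (- (2 * PI) * (/ 2 + INR N)) with (- PI + - (2 * PI * INR N)) by field.
    rewrite exp_plus. apply Rmult_le_compat_l; lra. }
  pose proof (Cmod_one_sub_bounds (up_exp N (0, /2))).
  pose proof (Cmod_one_sub_bounds (down_exp N (0, /2))).
  simpl partial_prod. rewrite !Cmod_mult.
  set (s := 1 - 4 * exp (- PI) * (1 - (/2) ^ N)) in IH.
  assert (Hs : 0 <= s <= 1) by (unfold s; nra).
  assert (Ha : 0 <= a <= /4) by (unfold a; nra).
  apply Rle_trans with (s * (1 - a) * (1 - a)).
  - simpl. unfold a, s in *. nra.
  - apply Rmult_le_compat; [nra | lra | apply Rmult_le_compat; lra | lra].
Qed.

Lemma Cmod_partial_prod_le_growth_majorant N w :
  Cmod (partial_prod N w) <= growth_majorant N (Rabs (Im w)).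
Proof.
  induction N as [|N IH]; simpl; [rewrite Cmod_1; lra|].
  rewrite !Cmod_mult.
  pose proof (Cmod_up_exp_le N w). pose proof (Cmod_down_exp_le N w).
  pose proof (Cmod_one_sub_bounds (up_exp N w)). pose proof (Cmod_one_sub_bounds (down_exp N w)).
  pose proof (Cmod_ge_0 (partial_prod N w)).
  pose proof (Cmod_ge_0 (1 - up_exp N w)%C). pose proof (Cmod_ge_0 (1 - down_exp N w)%C).
  set (e := exp (2 * PI * (Rabs (Im w) - INR N))) in *.
  replace ((1 + e) ^ 2) with ((1 + e) * (1 + e)) by ring. rewrite <- Rmult_assoc.
  apply Rmult_le_compat; [apply Rmult_le_pos; lra | lra | apply Rmult_le_compat; lra | lra].
Qed.

End PartialProducts.

Section Limit.

Variables (lambda : Z -> R) (F : C -> C).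
Hypothesis F_lim :
  forall w, filterlim (fun N => partial_prod lambda N w) eventually (locally (F w)).

Lemma lim_entire : entire F.
Proof.
  intros z. apply (ex_derive_of_uniform_quadratic_limit (partial_prod lambda) F z (/16)
                     (exp (768 * exp_height z) ^ 4)); [lra | exact F_lim |].
  intros n. apply partial_prod_remainder_le.
Qed.

Lemma lim_vanishes m n : F (IZR n + lambda m, IZR m) = 0%C.
Proof.
  destruct (partial_prod_vanishes lambda m n) as [k Hk].
  apply Cmod_eq_0, Rle_antisym; [|apply Cmod_ge_0].
  apply (Cmod_lim_le _ _ 0 (F_lim _)). exists (S k). intros N HN.
  rewrite Hk by lia. rewrite Cmod_0. lra.
Qed.

Lemma lim_half_i_neq_0 : F (0, /2) <> 0%C.
Proof.
  intros H0. pose proof exp_neg_PI_lt_quarter. pose proof (exp_pos (- PI)).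
  assert (Hlow : 1 - 4 * exp (- PI) <= Cmod (F (0, /2))).
  { apply (Cmod_lim_ge _ _ _ (F_lim _)). intros N.
    eapply Rle_trans; [|apply Cmod_partial_prod_half_i_ge]. pose proof (pow_half_bounds N). nra. }
  rewrite H0, Cmod_0 in Hlow. lra.
Qed.

Lemma lim_Cmod_le_exp_quadratic z : Cmod (F z) <= exp (40 + 36 * Cmod z ^ 2).
Proof.
  apply (Cmod_lim_le _ _ _ (F_lim z)). exists 0%nat. intros N _.
  eapply Rle_trans; [apply Cmod_partial_prod_le_growth_majorant|].
  eapply Rle_trans; [apply growth_majorant_le_quadratic, Rabs_pos|].
  apply exp_le_compat. pose proof (Rabs_Im_le_Cmod z).
  assert (Rabs (Im z) ^ 2 <= Cmod z ^ 2) by (apply pow_incr; split; [apply Rabs_pos | lra]). lra.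
Qed.

End Limit.

Theorem proposition6 (lambda : Z -> R)
  (hlam : forall m : Z, 0 <= lambda m < 1) :
  exists (P : C -> C) (c : R),
    entire P /\
    (exists z : C, P z <> 0%C) /\
    (forall m n : Z, P (IZR n + lambda m, IZR m) = 0%C) /\
    0 < c /\
    (forall z : C, Cmod (P z) <= exp (c * Cmod z ^ 2)).
Proof.
  destruct (functional_choice _ (partial_prod_cvg lambda)) as [F HF].
  pose proof (exp_pos (-40)) as Hc0.
  exists (fun w => F w * exp (-40))%C, 36. split; [|split; [|split; [|split]]].
  - apply entire_Cmult_r, (lim_entire lambda), HF.
  - exists (0, /2). intros H0. apply (f_equal Cmod) in H0.
    rewrite Cmod_mult, Cmod_R, Rabs_right, Cmod_0 in H0 by lra.
    apply (lim_half_i_neq_0 lambda F HF), Cmod_eq_0. nra.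
  - intros m n. rewrite (lim_vanishes lambda F HF). ring.
  - lra.
  - intros z. rewrite Cmod_mult, Cmod_R, Rabs_right by lra.
    pose proof (lim_Cmod_le_exp_quadratic lambda F HF z).
    replace (36 * Cmod z ^ 2) with (40 + 36 * Cmod z ^ 2 + -40) by ring.
    rewrite exp_plus. apply Rmult_le_compat_r; lra.
Qed.
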